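(* Let $G$ be the graph with vertex set $\{a_i,b_i,c_i : i\in[4]\}\cup\{q_i^j,r_i^j : i\in[4], j\in[2]\}$ and edges: the three four-cycles $A$: $a_ia_{i\bmod 4+1}$, $B$: $b_ib_{i\bmod 4+1}$, $C$: $c_ic_{i\bmod 4+1}$ ($i\in[4]$); $q_i^j a_k, q_i^j b_k, q_i^j c_k$ for all $i,k\in[4]$, $j\in[2]$; $r_i^jq_i^j$; and $r_i^ja_i, r_i^ja_{i\bmod 4+1}, r_i^jb_i, r_i^jb_{i\bmod 4+1}, r_i^jc_i, r_i^jc_{i\bmod 4+1}$ for $i\in[4],j\in[2]$. Call $\{q_i^j,r_i^j\}$ an apex pair. In any planar geometric storyplan of $G$ there exist at least 6 frames, each containing (all vertices of) a different apex pair and all vertices of the four-cycles $A$, $B$, $C$.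
   Context: A storyplan of a graph $G$ on time steps $[\ell]$ is a pair $(A,\mathcal{D})$ where $A$ assigns to each vertex $v$ a nonempty interval $A(v)\subseteq[\ell]$ of consecutive integers ($v$ is visible at each $t\in A(v)$), adjacent vertices have intersecting intervals, and $\mathcal{D}$ assigns one fixed point to each vertex and one fixed curve to each edge. The frame at $t$ is the drawing under $\mathcal{D}$ of $G[\{v : t\in A(v)\}]$; a frame contains a vertex if the vertex is visible at $t$. The storyplan is planar geometric if every frame is a planar drawing with all edges straight-line segments. *)

From mathcomp Require Import all_boot all_order all_algebra.
From mathcomp Require Import reals.
Set Implicit Arguments. Unset Strict Implicit. Unset Printing Implicit Defensive.
Import Order.TTheory GRing.Theory Num.Theory.
Local Open Scope ring_scope.

(* Vertices of G (indices 0-based: [4] ~ 'I_4, [2] ~ 'I_2). *)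
Inductive V : Type :=
| VA of 'I_4 | VB of 'I_4 | VC of 'I_4
| VQ of 'I_4 & 'I_2
| VR of 'I_4 & 'I_2.

(* successor on the four-cycle: i mod 4 + 1 in 1-based indexing *)
Definition nxt (i : 'I_4) : 'I_4 := inord (i.+1 %% 4).

Definition edge0 (u v : V) : Prop :=
  match u, v with
  | VA i, VA k => k = nxt i
  | VB i, VB k => k = nxt i
  | VC i, VC k => k = nxt i
  | VQ _ _, VA _ => True
  | VQ _ _, VB _ => True
  | VQ _ _, VC _ => True
  | VR i j, VQ i' j' => i = i' /\ j = j'
  | VR i _, VA k => k = i \/ k = nxt i
  | VR i _, VB k => k = i \/ k = nxt i
  | VR i _, VC k => k = i \/ k = nxt i
  | _, _ => False
  end.

Definition adj (u v : V) : Prop := edge0 u v \/ edge0 v u.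

Definition on_seg {R : realType} (p q x : R * R) : Prop :=
  exists t : R, 0 <= t <= 1 /\
    x = (p.1 + t * (q.1 - p.1), p.2 + t * (q.2 - p.2)).

Definition planar_straight_frame {R : realType} (vis : V -> Prop)
    (pos : V -> R * R) : Prop :=
  (forall u v, vis u -> vis v -> u <> v -> pos u <> pos v) /\
  (forall u v w, vis u -> vis v -> vis w -> adj u v -> w <> u -> w <> v ->
     ~ on_seg (pos u) (pos v) (pos w)) /\
  (forall u1 v1 u2 v2 x, vis u1 -> vis v1 -> vis u2 -> vis v2 ->
     adj u1 v1 -> adj u2 v2 ->
     ~ ((u1 = u2 /\ v1 = v2) \/ (u1 = v2 /\ v1 = u2)) ->
     on_seg (pos u1) (pos v1) x -> on_seg (pos u2) (pos v2) x ->
     exists w, (w = u1 \/ w = v1) /\ (w = u2 \/ w = v2) /\ x = pos w).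

(* v visible at time t: A(v) = [s v, e v] *)
Definition visible (s e : V -> nat) (t : nat) (v : V) : Prop :=
  (s v <= t <= e v)%N.

Definition planar_geometric_storyplan {R : realType} (l : nat)
    (s e : V -> nat) (pos : V -> R * R) : Prop :=
  (forall v, (1 <= s v)%N /\ (s v <= e v)%N /\ (e v <= l)%N) /\
  (forall u v, adj u v -> exists t, visible s e t u /\ visible s e t v) /\
  (forall t, (1 <= t <= l)%N -> planar_straight_frame (visible s e t) pos).

(* A frame is a planar straight-line drawing, so it cannot contain K_{3,3}
   plus an edge u v (three common neighbours x, y, z of u, v, w): two of x, y, z
   lie on the same side of the line u v, so one of them lies inside the triangle
   formed by the other with u and v; the paths through w then drag every common
   neighbour into that triangle, which forces two of these triangles each to
   contain the third vertex of the other.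

   Let L be the latest start and M the earliest end of a cycle vertex.  Every q
   is adjacent to all cycle vertices, so it is visible from M to L; if M < L,
   three q's together with a cycle vertex and its two cycle neighbours would form
   K_{3,3} plus an edge.  Hence all cycle vertices are visible on [L, M].  An
   apex pair {q, r} that misses [L, M] has r ending before L or starting after
   M; two such pairs on the same side give a frame showing q, q', r' and three
   neighbours of r', again K_{3,3} plus an edge.  So at least 6 of the 8 apex
   pairs share a frame with the cycles, and the first such frames are pairwise
   distinct for the same reason. *)

From mathcomp Require Import all_boot all_order all_algebra.
From mathcomp Require Import reals.
From mathcomp Require Import ring lra zify.
Set Implicit Arguments. Unset Strict Implicit. Unset Printing Implicit Defensive.
Import Order.TTheory GRing.Theory Num.Theory.

Section SignProducts.
Variable R : realDomainType.
Local Open Scope ring_scope.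
Implicit Types a b c : R.

Lemma mulr_gt0_same_sign a b c :
  0 < a * b -> 0 < a * c -> 0 < b * c.
Proof. by move=> ab ac; nra. Qed.

Lemma mulr_gt0_some_pair a b c :
  a != 0 -> b != 0 -> c != 0 -> [|| 0 < a * b, 0 < a * c | 0 < b * c].
Proof.
move=> a_neq0 b_neq0 c_neq0; apply/contraT; rewrite !negb_or -!leNgt => /and3P[ab ac bc].
have : 0 < (a * b * c) ^+ 2 by rewrite exprn_even_gt0 // !mulf_neq0.
have -> : (a * b * c) ^+ 2 = a * b * (a * c) * (b * c) by ring.
by rewrite ltNge mulr_ge0_le0 // mulr_le0.
Qed.

End SignProducts.

Section Orientation.
Variable R : realFieldType.
Local Open Scope ring_scope.
Implicit Types (a b c p q x : R * R) (t : R).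

Definition orient a b c : R :=
  (b.1 - a.1) * (c.2 - a.2) - (b.2 - a.2) * (c.1 - a.1).

Definition lerp p q t : R * R := (p.1 + t * (q.1 - p.1), p.2 + t * (q.2 - p.2)).

Lemma orient_rotate a b c : orient b c a = orient a b c.
Proof. by rewrite /orient; ring. Qed.

Lemma orient_swap a b c : orient b a c = - orient a b c.
Proof. by rewrite /orient; ring. Qed.

Lemma orient_aba a b : orient a b a = 0.
Proof. by rewrite /orient; ring. Qed.

Lemma orient_abb a b : orient a b b = 0.
Proof. by rewrite /orient; ring. Qed.

Lemma orient_split a b c x :
  orient a b x + orient b c x + orient c a x = orient a b c.
Proof. by rewrite /orient; ring. Qed.

Lemma orient_lerp a b p q t :
  orient a b (lerp p q t) = orient a b p + t * (orient a b q - orient a b p).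
Proof. by rewrite /orient /=; ring. Qed.

Lemma affine_root_itv (u v : R) : u * v <= 0 -> u != v -> 0 <= u / (u - v) <= 1.
Proof.
move=> uv_le0 neq_uv.
have d_neq0 : u - v != 0 by rewrite subr_eq0.
have d_gt0 : 0 < (u - v) ^+ 2 by rewrite exprn_even_gt0.
have ht : u / (u - v) * (u - v) = u by rewrite divfK.
set t := u / (u - v) in ht *.
have : (u - v) ^+ 2 * (t * t - t) <= 0.
  have -> : (u - v) ^+ 2 * (t * t - t) = (t * (u - v)) ^+ 2 - t * (u - v) * (u - v) by ring.
  rewrite ht; nra.
rewrite pmulr_rle0 // => tt_le; apply/andP; split; nra.
Qed.

Lemma affine_pos (u v t : R) : 0 < u -> 0 < v -> 0 <= t <= 1 -> 0 < u + t * (v - u).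
Proof. by move=> u_gt0 v_gt0 /andP[t_ge0 t_le1]; nra. Qed.

(* [2] is a sentinel: for [v > 0] the path [u + t * (v - u)] stays positive on [0, 1]. *)
Definition exit_time (u v : R) : R := if v <= 0 then u / (u - v) else 2.

Lemma exit_timeP (u v : R) : 0 < u ->
  [/\ 0 < exit_time u v,
      forall t, 0 <= t <= 1 -> t <= exit_time u v -> 0 <= u + t * (v - u),
      v <= 0 -> exit_time u v <= 1
    & exit_time u v <= 1 -> u + exit_time u v * (v - u) = 0].
Proof.
rewrite /exit_time => u_gt0; case: ifPn => [v_le0|]; last first.
  rewrite -ltNge => v_gt0; split; [lra | | lra | lra].
  by move=> t t01 _; apply/ltW/affine_pos.
have d_gt0 : 0 < u - v by lra.
have ht : u / (u - v) * (u - v) = u by rewrite divfK // gt_eqF.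
split=> //.
- by rewrite divr_gt0.
- move=> t _ t_le.
  have -> : u + t * (v - u) = (u / (u - v) - t) * (u - v) by rewrite mulrBl ht; ring.
  by apply: mulr_ge0; lra.
- by rewrite ler_pdivrMr // mul1r; lra.
- by move=> _; rewrite -[X in X + _]ht; ring.
Qed.

Lemma first_exit (u1 v1 u2 v2 u3 v3 : R) :
  0 < u1 -> 0 < u2 -> 0 < u3 -> [|| v1 <= 0, v2 <= 0 | v3 <= 0] ->
  exists2 t, 0 <= t <= 1 &
    [/\ 0 <= u1 + t * (v1 - u1), 0 <= u2 + t * (v2 - u2), 0 <= u3 + t * (v3 - u3)
      & [\/ u1 + t * (v1 - u1) = 0, u2 + t * (v2 - u2) = 0 | u3 + t * (v3 - u3) = 0]].
Proof.
move=> /(exit_timeP v1) [r1_gt0 before1 le1_1 root1].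
move=> /(exit_timeP v2) [r2_gt0 before2 le1_2 root2].
move=> /(exit_timeP v3) [r3_gt0 before3 le1_3 root3] some_le0.
set r1 := exit_time u1 v1 in r1_gt0 before1 le1_1 root1.
set r2 := exit_time u2 v2 in r2_gt0 before2 le1_2 root2.
set r3 := exit_time u3 v3 in r3_gt0 before3 le1_3 root3.
set t := Num.min r1 (Num.min r2 r3).
have [t_r1 t_r2 t_r3] : [/\ t <= r1, t <= r2 & t <= r3] by rewrite /t !ge_min !lexx !orbT.
have t_le1 : t <= 1 by case/or3P: some_le0 => [/le1_1|/le1_2|/le1_3]; apply: le_trans.
have t01 : 0 <= t <= 1 by rewrite t_le1 andbT /t !le_min !ltW.
exists t => //; split; [exact: before1 | exact: before2 | exact: before3 |].
have min_eq (x y : R) : Num.min x y = x \/ Num.min x y = y.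
  by rewrite minEle; case: ifP; [left | right].
have t_cases : [\/ t = r1, t = r2 | t = r3].
  rewrite /t; case: (min_eq r1 (Num.min r2 r3)) => ->; first exact: Or31.
  by case: (min_eq r2 r3) => ->; [apply: Or32 | apply: Or33].
by case: t_cases => t_eq; rewrite t_eq in t_le1 *;
  [apply/Or31/root1 | apply/Or32/root2 | apply/Or33/root3].
Qed.

Definition in_triangle p a b c : bool :=
  [&& 0 < orient a b p, 0 < orient b c p & 0 < orient c a p] ||
  [&& orient a b p < 0, orient b c p < 0 & orient c a p < 0].

Lemma in_triangle_neq p a b c : in_triangle p a b c -> [/\ p != a, p != b & p != c].
Proof.
move=> p_in; split; apply/eqP => p_eq; move: p_in; rewrite p_eq /in_triangle.
- by rewrite orient_aba ltxx.
- by rewrite orient_abb ltxx.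
- by rewrite orient_abb ltxx /= !andbF.
Qed.

Lemma in_triangle_swap p a b c : in_triangle p a c b = in_triangle p a b c.
Proof.
have rev3 (x y z : bool) : [&& x, y & z] = [&& z, y & x] by case: x y z => [] [] [].
rewrite /in_triangle (orient_swap c a) (orient_swap b c) (orient_swap a b).
by rewrite !oppr_gt0 !oppr_lt0 orbC [X in X || _]rev3 [X in _ || X]rev3.
Qed.

Lemma in_triangle_same_side x y u v :
  in_triangle y x u v -> 0 < orient u v x * orient u v y.
Proof.
move=> y_in; have := orient_split x u v y; rewrite -(orient_rotate x u v).
by case/orP: y_in => /and3P[? ? ?] ?; [rewrite mulr_gt0 | rewrite nmulr_rgt0]; lra.
Qed.

Lemma in_triangle_asym x y u v : in_triangle y x u v -> ~~ in_triangle x y u v.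
Proof.
move=> y_in; have := orient_split x u v y; rewrite -(orient_rotate x u v).
have : orient y u x = - orient x u y by rewrite /orient; ring.
move=> ? ?; apply/negP => x_in.
by case/orP: y_in => /and3P[? ? ?]; case/orP: x_in => /and3P[? ? ?]; lra.
Qed.

End Orientation.

Section Segments.
Variable R : realType.
Local Open Scope ring_scope.
Implicit Types (a b c d p q x : R * R).

Lemma on_seg_sym p q x : on_seg p q x -> on_seg q p x.
Proof.
case=> t [/andP[t_ge0 t_le1] ->]; exists (1 - t); split; first by apply/andP; split; lra.
by congr pair; ring.
Qed.

Lemma segments_cross a b c d :
  orient c d a * orient c d b < 0 -> orient a b c * orient a b d < 0 ->
  exists x, on_seg a b x /\ on_seg c d x.
Proof.
have opp_signs (u v : R) : u * v < 0 -> u * v <= 0 /\ u - v != 0.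
  move=> uv_lt0; split; first exact: ltW.
  by rewrite subr_eq0; apply: contraTneq uv_lt0 => ->; rewrite -leNgt -expr2 sqr_ge0.
move=> /opp_signs[sab nab] /opp_signs[scd ncd].
set t := orient c d a / (orient c d a - orient c d b).
set u := orient a b c / (orient a b c - orient a b d).
exists (lerp a b t); split; first by exists t; split; rewrite // affine_root_itv // -subr_eq0.
exists u; split; first by rewrite affine_root_itv // -subr_eq0.
by move: nab ncd; rewrite /t /u /lerp /orient => nab ncd; congr pair; field; apply/andP.
Qed.

Lemma on_seg_same_side a b p q x :
  0 < orient a b p * orient a b q -> on_seg p q x -> 0 < orient a b p * orient a b x.
Proof.
move=> pq_gt0 [t [/andP[t_ge0 t_le1] ->]]; rewrite orient_lerp.
set P := orient a b p in pq_gt0 *; set Q := orient a b q in pq_gt0 *.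
have -> : P * (P + t * (Q - P)) = (1 - t) * (P * P) + t * (P * Q) by ring.
have P_neq0 : P != 0 by apply: contraTneq pq_gt0 => ->; rewrite mul0r ltxx.
have PP_gt0 : 0 < P * P by rewrite -expr2 exprn_even_gt0.
have [t_lt1|t_ge1] := ltP t 1; last first.
  have t_eq1 : t = 1 by lra.
  by rewrite t_eq1 subrr mul0r add0r mul1r.
have : 0 < (1 - t) * (P * P) by rewrite mulr_gt0 // subr_gt0.
have : 0 <= t * (P * Q) by rewrite mulr_ge0 // ltW.
lra.
Qed.

Lemma on_seg_of_orient a b c x :
  orient a b x = 0 -> 0 <= orient b c x -> 0 <= orient c a x -> 0 < orient a b c ->
  on_seg a b x.
Proof.
move=> abx_eq0 bcx_ge0 cax_ge0 abc_gt0.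
have := orient_split a b c x; rewrite abx_eq0 add0r => split_eq.
have abc_neq0 : orient a b c != 0 by rewrite gt_eqF.
exists (orient c a x / orient a b c); split.
  apply/andP; split; first by rewrite divr_ge0 // ltW.
  by rewrite ler_pdivrMr // mul1r; lra.
have bary1 : orient a b c * x.1 = orient b c x * a.1 + orient c a x * b.1 + orient a b x * c.1.
  by rewrite /orient; ring.
have bary2 : orient a b c * x.2 = orient b c x * a.2 + orient c a x * b.2 + orient a b x * c.2.
  by rewrite /orient; ring.
have bcx_eq : orient b c x = orient a b c - orient c a x by lra.
move: bary1 bary2; rewrite abx_eq0 mul0r addr0 bcx_eq.
case: x {abx_eq0 bcx_ge0 cax_ge0 split_eq bcx_eq} => x1 x2 /= bary1 bary2.
by congr pair; apply: (mulfI abc_neq0); rewrite ?bary1 ?bary2; field.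
Qed.

Lemma collinear_lerp a b c : a <> b -> orient a b c = 0 -> exists k, c = lerp a b k.
Proof.
case: a b c => a1 a2 [b1 b2] [c1 c2] neq_ab; rewrite /orient /= => abc_eq0.
set n := (b1 - a1) ^+ 2 + (b2 - a2) ^+ 2.
have n_neq0 : n != 0.
  rewrite paddr_eq0 ?sqr_ge0 // !sqrf_eq0 !subr_eq0; apply/negP => /andP[/eqP e1 /eqP e2].
  by apply: neq_ab; rewrite e1 e2.
exists (((c1 - a1) * (b1 - a1) + (c2 - a2) * (b2 - a2)) / n).
congr pair; apply: (mulfI n_neq0); apply/eqP; rewrite -subr_eq0 /=; apply/eqP.
  transitivity (- (b2 - a2) * ((b1 - a1) * (c2 - a2) - (b2 - a2) * (c1 - a1))).
    by move: n_neq0; rewrite /n => n_neq0; field.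
  by rewrite abc_eq0 mulr0.
transitivity ((b1 - a1) * ((b1 - a1) * (c2 - a2) - (b2 - a2) * (c1 - a1))).
  by move: n_neq0; rewrite /n => n_neq0; field.
by rewrite abc_eq0 mulr0.
Qed.

Lemma collinear_on_seg a b c : a <> b -> orient a b c = 0 ->
  [\/ on_seg a b c, on_seg a c b | on_seg b c a].
Proof.
move=> neq_ab /(collinear_lerp neq_ab) [k ->].
case: a b {neq_ab} => a1 a2 [b1 b2]; rewrite /lerp /=.
have [k_ge0|k_lt0] := lerP 0 k; last first.
  have k1_gt0 : 0 < 1 - k by lra.
  apply: Or33; exists (1 - k)^-1; split.
    by apply/andP; split; [rewrite invr_ge0 | rewrite invf_le1 //]; lra.
  by congr pair => /=; field; rewrite gt_eqF.
have [k_le1|k_gt1] := lerP k 1.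
  by apply: Or31; exists k; split; rewrite ?k_ge0.
have k_gt0 : 0 < k by lra.
apply: Or32; exists k^-1; split.
  by apply/andP; split; [rewrite invr_ge0 | rewrite invf_le1 //]; lra.
by congr pair => /=; field; rewrite gt_eqF.
Qed.


Lemma triangle_exit a b c p q : in_triangle p a b c -> ~~ in_triangle q a b c ->
  exists x, on_seg p q x /\ [\/ on_seg a b x, on_seg b c x | on_seg c a x].
Proof.
wlog p_pos : b c / [&& 0 < orient a b p, 0 < orient b c p & 0 < orient c a p].
  move=> wlog_pos p_in q_out; case/orP: (p_in) => [p_pos|p_neg]; first exact: wlog_pos.
  have [|||x [pq_x side]] := wlog_pos c b;
    rewrite ?(in_triangle_swap p a b c) ?(in_triangle_swap q a b c) //.
    rewrite (orient_swap c a) (orient_swap b c) (orient_swap a b) !oppr_gt0.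
    by case/and3P: p_neg => -> -> ->.
  exists x; split=> //.
  by case: side => /on_seg_sym; [apply: Or33 | apply: Or32 | apply: Or31].
case/and3P: p_pos => abp bcp cap _.
rewrite /in_triangle negb_or => /andP[+ _]; rewrite !negb_and -!leNgt => q_out.
have [t t01 [ab_ge0 bc_ge0 ca_ge0 on_side]] := first_exit abp bcp cap q_out.
have abc_gt0 : 0 < orient a b c by rewrite -(orient_split a b c p); lra.
exists (lerp p q t); split; first by exists t.
rewrite -!orient_lerp in ab_ge0 bc_ge0 ca_ge0 on_side.
case: on_side => side_eq0.
- by apply: Or31; apply: (on_seg_of_orient (c := c)).
- apply: Or32; apply: (on_seg_of_orient (c := a)) => //.
  by rewrite (orient_rotate a b c).
- apply: Or33; apply: (on_seg_of_orient (c := b)) => //.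
  by rewrite (orient_rotate b c a) (orient_rotate a b c).
Qed.

End Segments.

Lemma nxt_neq i : nxt i <> i.
Proof. by move/(congr1 val); rewrite /nxt /= inordK ?ltn_mod //; case: i => [[|[|[|[|n]]]] ?]. Qed.

Lemma nxt2_neq i : nxt (nxt i) <> i.
Proof.
by move/(congr1 val); rewrite /nxt /= !inordK ?ltn_mod //; case: i => [[|[|[|[|n]]]] ?].
Qed.

Lemma nxt_onto i : exists j, nxt j = i.
Proof.
exists (nxt (nxt (nxt i))); apply/val_inj.
by rewrite /nxt /= !inordK ?ltn_mod //; case: i => [[|[|[|[|n]]]] ?].
Qed.

Lemma adj_sym u v : adj u v -> adj v u.
Proof. by case; [right | left]. Qed.

Lemma adj_neq u v : adj u v -> u <> v.
Proof. by move=> uv_adj uv; subst v; case: uv_adj; case: u => //= i /esym /nxt_neq. Qed.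

Section Frame.
Variables (R : realType) (vis : V -> Prop) (pos : V -> R * R).
Hypothesis planar : planar_straight_frame vis pos.
Local Open Scope ring_scope.
Local Notation o u v w := (orient (pos u) (pos v) (pos w)).
Local Notation inside p a b c := (in_triangle (pos p) (pos a) (pos b) (pos c)).

Lemma frame_pos_inj u v : vis u -> vis v -> u <> v -> pos u <> pos v.
Proof. by case: planar => pos_inj _; apply: pos_inj. Qed.

Lemma frame_vertex_off_edge u v w : vis u -> vis v -> vis w -> adj u v ->
  w <> u -> w <> v -> ~ on_seg (pos u) (pos v) (pos w).
Proof. by case: planar => _ [off_edge _]; apply: off_edge. Qed.

Lemma frame_edges_disjoint u1 v1 u2 v2 x :
  vis u1 -> vis v1 -> vis u2 -> vis v2 -> adj u1 v1 -> adj u2 v2 ->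
  u1 <> u2 -> u1 <> v2 -> v1 <> u2 -> v1 <> v2 ->
  on_seg (pos u1) (pos v1) x -> ~ on_seg (pos u2) (pos v2) x.
Proof.
case: planar => _ [_ meet] vu1 vv1 vu2 vv2 a1 a2 n1 n2 n3 n4 s1 s2.
have distinct : ~ ((u1 = u2 /\ v1 = v2) \/ (u1 = v2 /\ v1 = u2)) by case=> [[]|[]].
have [w [w1 [w2 _]]] := meet u1 v1 u2 v2 x vu1 vv1 vu2 vv2 a1 a2 distinct s1 s2.
by case: w1 w2 => -> [] e; [apply: n1 | apply: n2 | apply: n3 | apply: n4].
Qed.

Lemma frame_orient_neq0 u v x : vis u -> vis v -> vis x ->
  adj u v -> adj x u -> adj x v -> o u v x != 0.
Proof.
move=> vu vv vx uv xu xv; apply/eqP => /(collinear_on_seg (frame_pos_inj vu vv (adj_neq uv))).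
case.
- exact: frame_vertex_off_edge vu vv vx uv (adj_neq xu) (adj_neq xv).
- exact: frame_vertex_off_edge vu vx vv (adj_sym xu) (adj_neq (adj_sym uv)) (adj_neq (adj_sym xv)).
- exact: frame_vertex_off_edge vv vx vu (adj_sym xv) (adj_neq uv) (adj_neq (adj_sym xu)).
Qed.

Lemma frame_in_triangle_closed a b c p q : vis a -> vis b -> vis c -> vis p -> vis q ->
  adj a b -> adj b c -> adj c a -> adj p q -> q <> a -> q <> b -> q <> c ->
  inside p a b c -> inside q a b c.
Proof.
move=> va vb vc vp vq ab bc ca pq qa qb qc p_in; apply/contraT => q_out; exfalso.
have [/eqP pa /eqP pb /eqP pc] := in_triangle_neq p_in.
have [x [pq_x [ab_x|bc_x|ca_x]]] := triangle_exit p_in q_out.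
- by apply: (frame_edges_disjoint vp vq va vb pq ab _ _ _ _ pq_x ab_x); congruence.
- by apply: (frame_edges_disjoint vp vq vb vc pq bc _ _ _ _ pq_x bc_x); congruence.
- by apply: (frame_edges_disjoint vp vq vc va pq ca _ _ _ _ pq_x ca_x); congruence.
Qed.

Lemma frame_same_side_orient_neq0 x y u v : vis x -> vis y -> vis v ->
  adj x v -> adj y v -> x <> y -> 0 < o u v x * o u v y -> o v x y != 0.
Proof.
move=> vx vy vv xv yv nxy same; apply/eqP.
move=> /(collinear_on_seg (frame_pos_inj vv vx (adj_neq (adj_sym xv)))) [].
- exact: frame_vertex_off_edge vv vx vy (adj_sym xv) (adj_neq yv) (nesym nxy).
- exact: frame_vertex_off_edge vv vy vx (adj_sym yv) (adj_neq xv) nxy.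
- by move/(on_seg_same_side same); rewrite orient_abb mulr0 ltxx.
Qed.

Lemma frame_nested_pos x y u v : vis x -> vis y -> vis u -> vis v ->
  adj u v -> adj x u -> adj x v -> adj y u -> adj y v -> x <> y ->
  0 < o u v x -> 0 < o u v y -> inside y x u v || inside x y u v.
Proof.
move=> vx vy vu vv uv xu xv yu yv nxy x_pos y_pos.
have same : 0 < o u v x * o u v y by rewrite mulr_gt0.
have vxy_neq0 : o v x y != 0 := frame_same_side_orient_neq0 vx vy vv xv yv nxy same.
have xuy_neq0 : o x u y != 0.
  rewrite -oppr_eq0 -orient_swap; apply: (frame_same_side_orient_neq0 (u := v)) => //.
  by rewrite !(orient_swap (pos u) (pos v)) mulrNN.
have vyx_opp : o v y x = - o v x y by rewrite /orient; ring.
have yux_opp : o y u x = - o x u y by rewrite /orient; ring.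
(* Equal signs of [o v x y] and [o x u y] nest one triangle in the other;
   opposite signs make two edges cross. *)
have [vxy_lt0|vxy_gt0|/eqP] := ltrgtP (o v x y) 0; last by rewrite (negPf vxy_neq0).
- have [xuy_lt0|xuy_gt0|/eqP] := ltrgtP (o x u y) 0; last by rewrite (negPf xuy_neq0).
    by rewrite /in_triangle vyx_opp yux_opp !oppr_gt0 vxy_lt0 xuy_lt0 x_pos orbT.
  have [z [uy_z vx_z]] : exists z, on_seg (pos u) (pos y) z /\ on_seg (pos v) (pos x) z.
    apply: segments_cross.
    - by rewrite orient_rotate pmulr_rlt0.
    - rewrite (orient_rotate (pos v)) (orient_rotate (pos x)) orient_swap.
      by rewrite mulNr oppr_lt0 mulr_gt0.
  exfalso; exact: (frame_edges_disjoint vu vy vv vx (adj_sym yu) (adj_sym xv)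
    (adj_neq uv) (nesym (adj_neq xu)) (adj_neq yv) (nesym nxy) uy_z vx_z).
- have [xuy_lt0|xuy_gt0|/eqP] := ltrgtP (o x u y) 0; last by rewrite (negPf xuy_neq0).
    have [z [ux_z vy_z]] : exists z, on_seg (pos u) (pos x) z /\ on_seg (pos v) (pos y) z.
      apply: segments_cross.
      - by rewrite orient_rotate vyx_opp mulrN oppr_lt0 mulr_gt0.
      - rewrite (orient_rotate (pos v)) (orient_swap (pos x)) orient_swap.
        by rewrite mulrNN pmulr_rlt0.
    exfalso; exact: (frame_edges_disjoint vu vx vv vy (adj_sym xu) (adj_sym yv)
      (adj_neq uv) (nesym (adj_neq yu)) (adj_neq xv) nxy ux_z vy_z).
  by rewrite /in_triangle vxy_gt0 xuy_gt0 y_pos.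
Qed.

Lemma frame_nested x y u v : vis x -> vis y -> vis u -> vis v ->
  adj u v -> adj x u -> adj x v -> adj y u -> adj y v -> x <> y ->
  0 < o u v x * o u v y -> inside y x u v || inside x y u v.
Proof.
move=> vx vy vu vv uv xu xv yu yv nxy same.
have [x_neg|x_pos|x_eq0] := ltrgtP (o u v x) 0.
- rewrite -(in_triangle_swap (pos y)) -(in_triangle_swap (pos x)).
  have swap_uv t : o v u t = - o u v t by rewrite orient_swap.
  apply: frame_nested_pos; rewrite ?swap_uv ?oppr_gt0 //; first exact: adj_sym.
  by rewrite nmulr_rgt0 in same.
- by apply: frame_nested_pos; rewrite // pmulr_rgt0 in same.
- by move: same; rewrite x_eq0 mul0r ltxx.
Qed.

Section K33PlusEdge.
Variables u v w : V.
Hypotheses (vu : vis u) (vv : vis v) (vw : vis w) (uv : adj u v).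
Hypotheses (nuw : u <> w) (nvw : v <> w).

Definition common_neighbour x := [/\ vis x, adj x u, adj x v & adj x w].

Lemma in_triangle_through_w x y z : common_neighbour x -> common_neighbour y ->
  common_neighbour z -> z <> x -> inside y x u v -> inside z x u v.
Proof.
move=> [vx xu xv xw] [vy _ _ yw] [vz zu zv zw] nzx y_in.
have w_in : inside w x u v := frame_in_triangle_closed vx vu vv vy vw xu uv (adj_sym xv) yw
  (nesym (adj_neq xw)) (nesym nuw) (nesym nvw) y_in.
exact: frame_in_triangle_closed vx vu vv vw vz xu uv (adj_sym xv) (adj_sym zw) nzx
  (adj_neq zu) (adj_neq zv) w_in.
Qed.

Lemma no_K33_plus_edge_nested x y z : common_neighbour x -> common_neighbour y ->
  common_neighbour z -> x <> y -> x <> z -> y <> z -> inside y x u v -> False.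
Proof.
move=> cx cy cz nxy nxz nyz y_in.
have z_in := in_triangle_through_w cx cy cz (nesym nxz) y_in.
have yz_same := mulr_gt0_same_sign (in_triangle_same_side y_in) (in_triangle_same_side z_in).
have [[vy yu yv _] [vz zu zv _]] := (cy, cz).
case/orP: (frame_nested vy vz vu vv uv yu yv zu zv nyz yz_same) => [z_in_y | y_in_z].
- have x_in_y := in_triangle_through_w cy cz cx nxy z_in_y.
  by move/negP: (in_triangle_asym y_in); apply.
- have x_in_z := in_triangle_through_w cz cy cx nxz y_in_z.
  by move/negP: (in_triangle_asym z_in); apply.
Qed.

Lemma no_K33_plus_edge_same_side x y z : common_neighbour x -> common_neighbour y ->
  common_neighbour z -> x <> y -> x <> z -> y <> z -> 0 < o u v x * o u v y -> False.
Proof.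
move=> cx cy cz nxy nxz nyz same.
have [[vx xu xv _] [vy yu yv _]] := (cx, cy).
case/orP: (frame_nested vx vy vu vv uv xu xv yu yv nxy same).
- exact: no_K33_plus_edge_nested cx cy cz nxy nxz nyz.
- exact: no_K33_plus_edge_nested cy cx cz (nesym nxy) nyz nxz.
Qed.

Lemma no_K33_plus_edge x y z : common_neighbour x -> common_neighbour y ->
  common_neighbour z -> x <> y -> x <> z -> y <> z -> False.
Proof.
move=> cx cy cz nxy nxz nyz.
have off_uv t : common_neighbour t -> o u v t != 0.
  by case=> vt tu tv _; apply: frame_orient_neq0.
case/or3P: (mulr_gt0_some_pair (off_uv x cx) (off_uv y cy) (off_uv z cz)).
- exact: no_K33_plus_edge_same_side cx cy cz nxy nxz nyz.
- exact: no_K33_plus_edge_same_side cx cz cy nxz nxy (nesym nyz).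
- exact: no_K33_plus_edge_same_side cy cz cx nyz (nesym nxy) (nesym nxz).
Qed.

End K33PlusEdge.
End Frame.

Definition apex_q (p : 'I_4 * 'I_2) : V := VQ p.1 p.2.
Definition apex_r (p : 'I_4 * 'I_2) : V := VR p.1 p.2.

Definition cycle_vertex (c : 'I_3 * 'I_4) : V :=
  match val c.1 with 0 => VA c.2 | 1 => VB c.2 | _ => VC c.2 end.

Lemma apex_q_inj : injective apex_q.
Proof. by case=> [i j] [i' j'] [-> ->]. Qed.

Lemma adj_apex_q_cycle p c : adj (apex_q p) (cycle_vertex c).
Proof. by left; rewrite /cycle_vertex; case: (val c.1) => [|[|]]. Qed.

Section Storyplan.
Variables (R : realType) (l : nat) (s e : V -> nat) (pos : V -> R * R).
Hypothesis story : planar_geometric_storyplan l s e pos.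
Local Notation vis t := (visible s e t).

Lemma visible_time_range t v : vis t v -> 1 <= t <= l.
Proof. by case: story => /(_ v) v_range _; rewrite /visible; lia. Qed.

Lemma start_le_end v : s v <= e v.
Proof. by case: story => /(_ v); lia. Qed.

Lemma adj_start_le_end u v : adj u v -> s u <= e v.
Proof. by case: story => _ [overlap _] /overlap [t]; rewrite /visible; lia. Qed.

Lemma no_K33_plus_edge_at t x y z u v w :
  vis t u -> vis t v -> vis t w -> adj u v -> u <> w -> v <> w ->
  common_neighbour (vis t) u v w x -> common_neighbour (vis t) u v w y ->
  common_neighbour (vis t) u v w z -> x <> y -> x <> z -> y <> z -> False.
Proof.
move=> vu vv vw uv nuw nvw; case: story => _ [_ /(_ t (visible_time_range vu)) frame].
exact: (no_K33_plus_edge frame vu vv vw uv nuw nvw (x := x) (y := y) (z := z)).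
Qed.

Lemma no_two_apex_q_with_r t p p' : p <> p' ->
  vis t (apex_q p) -> vis t (apex_q p') -> vis t (apex_r p') ->
  vis t (VA p'.1) -> vis t (VA (nxt p'.1)) -> vis t (VB p'.1) -> False.
Proof.
move=> neq_pp' vq vq' vr' va va' vb.
apply: (no_K33_plus_edge_at (x := apex_q p) (y := apex_q p') (z := apex_r p') va va' vb) => //.
- by left.
- by split=> //; left.
- by split=> //; left.
- by split=> //; [left; left | left; right | left; left].
- by move/apex_q_inj.
Qed.

Definition last_cycle_start : nat :=
  s (cycle_vertex [arg max_(c > (ord0, ord0)) s (cycle_vertex c)]).
Definition first_cycle_end : nat :=
  e (cycle_vertex [arg min_(c < (ord0, ord0)) e (cycle_vertex c)]).
Local Notation L := last_cycle_start.
Local Notation M := first_cycle_end.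

Lemma cycle_start_le c : s (cycle_vertex c) <= L.
Proof. by rewrite /L; case: arg_maxnP => // c' _; apply. Qed.

Lemma cycle_end_ge c : M <= e (cycle_vertex c).
Proof. by rewrite /M; case: arg_minnP => // c' _; apply. Qed.

Lemma cycles_visible t : L <= t <= M ->
  forall i, [/\ vis t (VA i), vis t (VB i) & vis t (VC i)].
Proof.
move=> /andP[L_le M_ge] i.
have vc (c : 'I_3) : vis t (cycle_vertex (c, i)).
  by have := cycle_start_le (c, i); have := cycle_end_ge (c, i); rewrite /visible; lia.
by split; [exact: vc ord0 | exact: vc (Ordinal (isT : 1 < 3)) | exact: vc ord_max].
Qed.

Lemma apex_q_start_le p : s (apex_q p) <= M.
Proof. exact/adj_start_le_end/adj_apex_q_cycle. Qed.

Lemma apex_q_end_ge p : L <= e (apex_q p).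
Proof. exact/adj_start_le_end/adj_sym/adj_apex_q_cycle. Qed.

Lemma core_nonempty : L <= M.
Proof.
rewrite leqNgt; apply/negP => M_lt_L.
have [i0 _ i0_min] := @arg_minnP _ ord0 xpredT (fun i => e (VA i)) isT.
have [j nxt_j] := nxt_onto i0.
(* [A i0] ends first among the [A]'s, so at [t] it is visible together with
   both of its cycle neighbours and, as [M < L], with every [q]. *)
set t := minn (e (VA i0)) L.
have vis_A i : s (VA i) <= e (VA i0) -> vis t (VA i).
  have : s (VA i) <= L := cycle_start_le (ord0, i).
  by have := i0_min i isT; rewrite /visible; lia.
have vis_q p : vis t (apex_q p).
  have : M <= e (VA i0) := cycle_end_ge (ord0, i0).
  by have := apex_q_start_le p; have := apex_q_end_ge p; rewrite /visible; lia.
have adj_i0 : adj (VA i0) (VA (nxt i0)) by left.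
have adj_j : adj (VA j) (VA i0) by left; rewrite /= nxt_j.
apply: (no_K33_plus_edge_at (t := t) (u := VA i0) (v := VA (nxt i0)) (w := VA j)
  (x := apex_q (ord0, ord0)) (y := apex_q (Ordinal (isT : 1 < 4), ord0))
  (z := apex_q (Ordinal (isT : 2 < 4), ord0))).
- exact/vis_A/start_le_end.
- exact/vis_A/adj_start_le_end/adj_sym.
- exact/vis_A/adj_start_le_end.
- exact: adj_i0.
- by case=> i0_j; apply: (nxt_neq (etrans nxt_j i0_j)).
- by case=> i0_j; apply: (nxt2_neq (etrans (congr1 nxt nxt_j) i0_j)).
all: try by move/apex_q_inj.
all: by split; [exact: vis_q | left | left | left].
Qed.

Definition apex_time p := maxn L (maxn (s (apex_q p)) (s (apex_r p))).

Definition apex_in_core p : bool :=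
  apex_time p <= minn M (minn (e (apex_q p)) (e (apex_r p))).

Lemma adj_apex_q_r p : adj (apex_q p) (apex_r p).
Proof. by right. Qed.

Lemma apex_in_core_frame p : apex_in_core p ->
  [/\ vis (apex_time p) (apex_q p), vis (apex_time p) (apex_r p) & L <= apex_time p <= M].
Proof. by rewrite /apex_in_core /apex_time /visible => core; split; lia. Qed.

Lemma apex_out_of_core p : ~~ apex_in_core p -> e (apex_r p) < L \/ M < s (apex_r p).
Proof.
have := core_nonempty; have := apex_q_start_le p; have := apex_q_end_ge p.
have := adj_start_le_end (adj_apex_q_r p); have := adj_start_le_end (adj_sym (adj_apex_q_r p)).
have := start_le_end (apex_q p); have := start_le_end (apex_r p).
rewrite /apex_in_core /apex_time; lia.
Qed.

Lemma early_apex_unique p p' : e (apex_r p) < L -> e (apex_r p') < L -> p = p'.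
Proof.
wlog le_pp' : p p' / e (apex_r p) <= e (apex_r p').
  move=> wlog_le early early'; have [le|/ltnW le] := leqP (e (apex_r p)) (e (apex_r p')).
    exact: wlog_le.
  exact/esym/wlog_le.
move=> early early'; case: (eqVneq p p') => // /eqP neq_pp'; exfalso.
set t := e (apex_r p').
have vis_nbr v : adj (apex_r p') v -> M <= e v -> vis t v.
  move=> /adj_sym /adj_start_le_end; have := core_nonempty; rewrite /visible; lia.
have vis_q p'' : s (apex_q p'') <= t -> vis t (apex_q p'').
  by have := apex_q_end_ge p''; rewrite /visible; lia.
apply: (no_two_apex_q_with_r (t := t) neq_pp').
- apply: vis_q; have := adj_start_le_end (adj_apex_q_r p); lia.
- exact/vis_q/adj_start_le_end/adj_apex_q_r.
- by have := start_le_end (apex_r p'); rewrite /visible; lia.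
- by apply: vis_nbr (cycle_end_ge (ord0, _)); left; left.
- by apply: vis_nbr (cycle_end_ge (ord0, _)); left; right.
- by apply: vis_nbr (cycle_end_ge (Ordinal (isT : 1 < 3), _)); left; left.
Qed.

Lemma late_apex_unique p p' : M < s (apex_r p) -> M < s (apex_r p') -> p = p'.
Proof.
wlog le_pp' : p p' / s (apex_r p') <= s (apex_r p).
  move=> wlog_le late late'; have [le|/ltnW le] := leqP (s (apex_r p')) (s (apex_r p)).
    exact: wlog_le.
  exact/esym/wlog_le.
move=> late late'; case: (eqVneq p p') => // /eqP neq_pp'; exfalso.
set t := s (apex_r p').
have vis_nbr v : adj (apex_r p') v -> s v <= L -> vis t v.
  move=> /adj_start_le_end; have := core_nonempty; rewrite /visible; lia.
have vis_q p'' : t <= e (apex_q p'') -> vis t (apex_q p'').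
  by have := apex_q_start_le p''; rewrite /visible; lia.
apply: (no_two_apex_q_with_r (t := t) neq_pp').
- apply: vis_q; have := adj_start_le_end (adj_sym (adj_apex_q_r p)); lia.
- exact/vis_q/adj_start_le_end/adj_sym/adj_apex_q_r.
- by have := start_le_end (apex_r p'); rewrite /visible; lia.
- by apply: vis_nbr (cycle_start_le (ord0, _)); left; left.
- by apply: vis_nbr (cycle_start_le (ord0, _)); left; right.
- by apply: vis_nbr (cycle_start_le (Ordinal (isT : 1 < 3), _)); left; left.
Qed.

Lemma apex_time_inj : {in apex_in_core &, injective apex_time}.
Proof.
move=> p p' core core' same_time; case: (eqVneq p p') => // /eqP neq_pp'; exfalso.
have [vq _ core_time] := apex_in_core_frame core.
have [vq' vr' _] := apex_in_core_frame core'; rewrite -same_time in vq' vr'.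
have [va vb _] := cycles_visible core_time p'.1.
have [va' _ _] := cycles_visible core_time (nxt p'.1).
exact: no_two_apex_q_with_r neq_pp' vq vq' vr' va va' vb.
Qed.

Lemma apex_in_core_card : 6 <= #|[set p | apex_in_core p]|.
Proof.
pose early := [set p | e (apex_r p) < L].
pose late := [set p | M < s (apex_r p)].
have early_le1 : #|early| <= 1.
  by apply/card_le1_eqP => p p'; rewrite !inE => ep ep'; apply: early_apex_unique ep' ep.
have late_le1 : #|late| <= 1.
  by apply/card_le1_eqP => p p'; rewrite !inE => lp lp'; apply: late_apex_unique lp' lp.
have out_le : #|~: [set p | apex_in_core p]| <= #|early :|: late|.
  by apply/subset_leq_card/subsetP => p; rewrite !inE => /apex_out_of_core /orP.
have := cardsC [set p | apex_in_core p]; have := cardsU early late.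
rewrite card_prod !card_ord; lia.
Qed.

End Storyplan.

Lemma card_ge_injection (T : finType) (A : {pred T}) n : n <= #|A| ->
  exists2 f : 'I_n -> T, injective f & forall k, f k \in A.
Proof.
move=> le_nA; exists (fun k => enum_val (widen_ord le_nA k)); last by move=> k; apply: enum_valP.
by move=> k1 k2 /enum_val_inj /(congr1 val) /= k12; apply: val_inj.
Qed.

Theorem corollary4 (R : realType) (l : nat) (s e : V -> nat) (pos : V -> R * R) :
  planar_geometric_storyplan l s e pos ->
  exists (ts : 'I_6 -> nat) (ps : 'I_6 -> 'I_4 * 'I_2),
    injective ts /\ injective ps /\
    forall k : 'I_6,
      (1 <= ts k <= l)%N /\
      visible s e (ts k) (VQ (ps k).1 (ps k).2) /\
      visible s e (ts k) (VR (ps k).1 (ps k).2) /\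
      (forall i : 'I_4, visible s e (ts k) (VA i) /\
         visible s e (ts k) (VB i) /\ visible s e (ts k) (VC i)).
Proof.
move=> story.
have [ps ps_inj ps_core] := card_ge_injection (apex_in_core_card story).
have {}ps_core k : apex_in_core s e (ps k) by have := ps_core k; rewrite inE.
exists (fun k => apex_time s (ps k)), ps; split.
  by move=> k1 k2 /(apex_time_inj story (ps_core k1) (ps_core k2)) /ps_inj.
split=> // k /=; have [vq vr /cycles_visible cycles] := apex_in_core_frame (ps_core k).
split; [exact: (visible_time_range story vq) | do 2 split=> //].
by move=> i; have [] := cycles i.
Qed.
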